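(* Let $q$ be a prime power, $n\ge 1$, and let $f(x)$ be a monic irreducible polynomial of degree $2n$ over $\mathbb{F}_q$ of order $e(q^n+1)$ for some positive integer $e$. (a) Let $\alpha\in\mathbb{F}_{q^{2n}}$ be a zero of $f(x)$ and set $\beta=\alpha^e$. Then $x^{q^n+1}+x^{q^n}-(\beta^{q^n}+\beta+1)x+1$ is an irreducible polynomial over $\mathbb{F}_{q^n}$. (b) Let $R(x)$ be the remainder of $x^{eq^n}+x^e+1$ modulo $f(x)$, and let $\psi(x)=\sum_{u=0}^n\psi_u x^u\in\mathbb{F}_q[x]$ be the monic nonzero polynomial of least degree satisfying $\sum_{u=0}^{n}\psi_u (R(x))^u\equiv 0\pmod{f(x)}$. Then $\psi(x)$ is an irreducible polynomial of degree $n$ over $\mathbb{F}_q$. (c) With $\psi$ as in (b), the polynomial $$F(x)=x^n\,\psi\!\left(\frac{x^{q^n+1}+x^{q^n}+1}{x}\right)$$ is an irreducible polynomial of degree $n(q^n+1)$ over $\mathbb{F}_q$.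
   Context: The order of a polynomial $P(x)\in\mathbb{F}_q[x]$ with $P(0)\ne0$ is the least positive integer $t$ such that $P(x)$ divides $x^t-1$; for irreducible $P$ it equals the multiplicative order of any root of $P$. *)

From HB Require Import structures.
From mathcomp Require Import all_boot all_order all_algebra all_field.
Set Implicit Arguments. Unset Strict Implicit. Unset Printing Implicit Defensive.
Import GRing.Theory.
Local Open Scope ring_scope.

Definition poly_order (R : fieldType) (f : {poly R}) (t : nat) : Prop :=
  (0 < t)%N /\ f %| 'X^t - 1 /\
  (forall s : nat, (0 < s)%N -> f %| 'X^s - 1 -> (t <= s)%N).

(* x^n * psi(Q(x)/x) = \sum_{u=0}^n psi_u Q(x)^u x^(n-u) *)
Definition homog_comp (R : ringType) (n : nat) (psi Q : {poly R}) : {poly R} :=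
  \sum_(u < n.+1) psi`_u *: (Q ^+ u * 'X^(n - u)).

(* Write Q = q^n, let b be a primitive (Q+1)-th root of unity and g = b^Q + b + 1;
   since b^Q = b^-1, g - 1 is the trace of b from F_(Q^2) down to F_Q.  The
   irreducibility in (a) and (c) comes from one criterion: a polynomial whose
   roots all have Frobenius orbits at least as long as its degree is irreducible.
   (a) For a root t of x^(Q+1) + x^Q - g x + 1 the Moebius map
       mu t = (t - b^Q) / (t - b) satisfies mu (t^Q) = b * mu t, so t^(Q^k) = t
       forces b^k = 1, i.e. Q + 1 <= k.
   (b) f divides h(R) iff h(g) = 0, so psi is the minimal polynomial of g over
       F_q.  Now g^Q = g, while g^(q^r) = g for 0 < r < n would give
       b^(q^r) + b^-(q^r) = b + b^-1, forcing b^(q^r) to be b or b^-1, which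
       1 < q^r < Q excludes; so g has exactly n conjugates.
   (c) A root x of F satisfies (x^(Q+1) + x^Q + 1) / x = g^(q^k) for some k, so
       x is a root of the polynomial of (a) for b^(q^k).  If x^(q^m) = x then
       g^(q^m) = g, hence n divides m, and (a) gives m >= n (Q + 1). *)

From HB Require Import structures.
From mathcomp Require Import all_boot all_order all_algebra all_field.
From mathcomp Require Import ring zify.
Set Implicit Arguments. Unset Strict Implicit. Unset Printing Implicit Defensive.
Import GRing.Theory.
Local Open Scope ring_scope.

Section FrobeniusPower.
Variables (C : fieldType) (N : nat).

(* The proof argument lets the morphism instances below be inferred. *)
Definition frob_pow (_ : [pchar C].-nat N) (x : C) := x ^+ N.

Hypothesis charN : [pchar C].-nat N.

Fact frob_pow_is_nmod_morphism : nmod_morphism (frob_pow charN).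
Proof.
split=> [|x y]; last exact: exprDn_pchar.
by rewrite /frob_pow expr0n; case: N charN.
Qed.

Fact frob_pow_is_monoid_morphism : monoid_morphism (frob_pow charN).
Proof. by split=> [|x y]; rewrite /frob_pow ?expr1n ?exprMn. Qed.

HB.instance Definition _ :=
  GRing.isNmodMorphism.Build C C (frob_pow charN) frob_pow_is_nmod_morphism.
HB.instance Definition _ :=
  GRing.isMonoidMorphism.Build C C (frob_pow charN) frob_pow_is_monoid_morphism.

Lemma frob_pow_inj (x y : C) : x ^+ N = y ^+ N -> x = y.
Proof. exact: (fmorph_inj (frob_pow charN)). Qed.

Lemma root_frob_pow (P : {poly C}) x :
  (forall i, P`_i ^+ N = P`_i) -> root P x -> root P (x ^+ N).
Proof.
move=> fixP /rootP Px; apply/rootP.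
have -> : P = map_poly (frob_pow charN) P.
  by apply/polyP => i; rewrite coef_map /= /frob_pow fixP.
by rewrite (horner_map (frob_pow charN)) Px rmorph0.
Qed.

End FrobeniusPower.

Section FrobeniusOrbit.
Variables (C : fieldType) (N : nat).
Hypothesis charN : [pchar C].-nat N.

Lemma root_frob_pow_iter (P : {poly C}) x k :
  (forall i, P`_i ^+ N = P`_i) -> root P x -> root P (x ^+ (N ^ k)).
Proof.
move=> fixP Px; elim: k => [|k IHk]; first by rewrite expn0 expr1.
by rewrite expnSr exprM; apply: root_frob_pow.
Qed.

Lemma uniq_frob_orbit (x : C) m :
  (forall k, (0 < k < m)%N -> x ^+ (N ^ k) != x) ->
  uniq (mkseq (fun k => x ^+ (N ^ k)) m).
Proof.
move=> orbit_x; rewrite map_inj_in_uniq ?iota_uniq // => i j.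
rewrite !mem_iota !add0n => /andP[_ ltim] /andP[_ ltjm].
wlog leij : i j ltim ltjm / (i <= j)%N.
  move=> W; case: (leqP i j) => [|/ltnW]; first exact: W.
  by move=> leji /esym /W ->.
have charNi : [pchar C].-nat (N ^ i)%N by rewrite pnatX charN.
rewrite /= -{1}(subnK leij) expnD exprM => /esym /(frob_pow_inj charNi) /eqP.
apply: contraTeq => neqij; apply: orbit_x.
rewrite subn_gt0 ltn_neqAle leij neqij /=.
exact: leq_ltn_trans (leq_subr _ _) ltjm.
Qed.

Lemma frob_orbit_lt_size (P : {poly C}) x m :
  P != 0 -> (forall i, P`_i ^+ N = P`_i) -> root P x ->
  (forall k, (0 < k < m)%N -> x ^+ (N ^ k) != x) -> (m < size P)%N.
Proof.
move=> nzP fixP Px orbit_x; rewrite -[m](size_mkseq (fun k => x ^+ (N ^ k))).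
apply: max_poly_roots => //; last exact: uniq_frob_orbit.
by apply/allP => _ /mapP[k _ ->]; apply: root_frob_pow_iter.
Qed.

End FrobeniusOrbit.

Lemma irreducible_frob_orbit (F : fieldType) (C : closedFieldType)
    (phi : {rmorphism F -> C}) (N : nat) (G : {poly F}) :
  [pchar C].-nat N -> (1 < size G)%N -> (forall c, phi c ^+ N = phi c) ->
  (forall x, root (map_poly phi G) x ->
     forall k, (0 < k < (size G).-1)%N -> x ^+ (N ^ k) != x) ->
  irreducible_poly G.
Proof.
move=> charN sizeG fix_phi orbitG; split=> // d size_d dvd_dG.
have nzG : G != 0 by rewrite -size_poly_eq0 -lt0n ltnW.
have nzd : d != 0 by apply: contraNneq nzG => d0; move: dvd_dG; rewrite d0 dvd0p.
have [x dx] : exists x, root (map_poly phi d) x.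
  by apply/closed_rootP; rewrite size_map_poly size_d.
have Gx : root (map_poly phi G) x by apply: root_dvdp dx; rewrite dvdp_map.
have : ((size G).-1 < size (map_poly phi d))%N.
  apply: (frob_orbit_lt_size charN _ _ dx (orbitG x Gx)).
    by rewrite map_poly_eq0.
  by move=> i; rewrite coef_map fix_phi.
rewrite size_map_poly -dvdp_size_eqp // eqn_leq dvdp_leq //=.
by rewrite prednK // ltnW.
Qed.


Section FiniteFieldImage.
Variables (F : finFieldType) (T : fieldType) (phi : {rmorphism F -> T}).

Lemma pchar_nat_card : [pchar T].-nat #|F|.
Proof.
have [p p_pr charFp] := finPcharP F.
have charTp : p \in [pchar T] by rewrite (rmorph_pchar phi).
rewrite (eq_pnat _ (pcharf_eq charTp)) (card_pprimeChar charFp).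
by rewrite pnatX pnat_id.
Qed.

Lemma coef_map_expf_card (P : {poly F}) i :
  (map_poly phi P)`_i ^+ #|F| = (map_poly phi P)`_i.
Proof. by rewrite coef_map -rmorphXn expf_card. Qed.

(* The fixed points of c |-> c ^+ #|F| are the roots of the image of X^#|F| - X. *)
Lemma fmorph_expf_card_fixed (c : T) : c ^+ #|F| = c -> exists a, phi a = c.
Proof.
move=> fix_c; have : root (map_poly phi ('X^#|F| - 'X)) c.
  by rewrite rmorphB /= map_polyXn map_polyX rootE !hornerE fix_c subrr.
rewrite finField_genPoly rmorph_prod -big_enum /=.
under eq_bigr do rewrite map_polyXsubC.
rewrite -(big_map phi xpredT (fun y => 'X - y%:P)) root_prod_XsubC.
by case/mapP=> a _ ->; exists a.
Qed.

Lemma map_poly_expf_card_fixed (P : {poly T}) :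
  (forall i, P`_i ^+ #|F| = P`_i) -> exists P0 : {poly F}, map_poly phi P0 = P.
Proof.
move=> fixP; suff [s phi_s] : exists s, map phi s = P.
  by exists (Poly s); rewrite map_Poly phi_s polyseqK.
have : {subset polyseq P <= [pred c | c ^+ #|F| == c]}.
  by move=> _ /(nthP 0)[i _ <-]; rewrite inE fixP.
elim: (polyseq P) => [|c s IHs] fix_s; first by exists [::].
have [a phi_a] := fmorph_expf_card_fixed (eqP (fix_s c (mem_head c s))).
have [|s' phi_s'] := IHs; first by move=> x sx; apply: fix_s; rewrite inE sx orbT.
by exists (a :: s'); rewrite /= phi_a phi_s'.
Qed.

End FiniteFieldImage.

Section RootsOfMaps.
Variables (F T : fieldType) (phi : {rmorphism F -> T}).

Lemma irredp_dvdp_root (f h : {poly F}) a :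
  irreducible_poly f -> root (map_poly phi f) a -> root (map_poly phi h) a ->
  f %| h.
Proof.
move=> irr_f /rootP fa /rootP ha; apply: contraTT isT.
rewrite -irreducible_poly_coprime // => /Bezout_eq1_coprimepP[[u v] uv1].
have := congr1 (fun p => (map_poly phi p).[a]) uv1.
rewrite /= rmorphD !rmorphM /= !hornerE fa ha !mulr0 addr0 rmorph1 hornerC.
by move/esym/eqP; rewrite oner_eq0.
Qed.

Lemma poly_order_prim_root (f : {poly F}) t a :
  irreducible_poly f -> poly_order f t -> root (map_poly phi f) a ->
  t.-primitive_root a.
Proof.
move=> irr_f [t_gt0 [dvd_f_t min_t]] fa.
have map_Xn1 s : map_poly phi ('X^s - 1) = 'X^s - 1.
  by rewrite rmorphB rmorph1 /= map_polyXn.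
have at1 : a ^+ t = 1.
  have : root (map_poly phi ('X^t - 1)) a by apply: root_dvdp fa; rewrite dvdp_map.
  by rewrite map_Xn1 rootE !hornerE subr_eq0 => /eqP.
have [m prim_m dvd_mt] := prim_order_exists t_gt0 at1.
suff le_tm : (t <= m)%N.
  by have /eqP -> : t == m by rewrite eqn_leq le_tm dvdn_leq.
apply: min_t (prim_order_gt0 prim_m) _; apply: (irredp_dvdp_root irr_f fa).
by rewrite map_Xn1 rootE !hornerE (prim_expr_order prim_m) subrr.
Qed.

Lemma irredp_min_root (psi : {poly F}) x :
  psi != 0 -> root (map_poly phi psi) x ->
  (forall g, g != 0 -> root (map_poly phi g) x -> (size psi <= size g)%N) ->
  irreducible_poly psi.
Proof.
move=> nz_psi psi_x min_psi; split.
  by rewrite -(size_map_poly phi) (root_size_gt1 _ psi_x) ?map_poly_eq0.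
move=> d size_d1 dvd_d_psi; rewrite -dvdp_size_eqp // eqn_leq dvdp_leq //=.
have nz_d : d != 0.
  by apply: contraNneq nz_psi => d0; move: dvd_d_psi; rewrite d0 dvd0p.
have size_d : (1 < size d)%N by rewrite ltn_neqAle eq_sym size_d1 lt0n size_poly_eq0.
set c := psi %/ d; have psi_cd : psi = c * d by rewrite divpK.
have nz_c : c != 0 by apply: contraNneq nz_psi => c0; rewrite psi_cd c0 mul0r.
have : root (map_poly phi c) x || root (map_poly phi d) x.
  by rewrite -rootM -rmorphM -psi_cd.
case/orP=> [cx | dx]; last exact: min_psi.
have := min_psi c nz_c cx; rewrite {1}psi_cd size_mul //.
rewrite -(prednK (ltnW size_d)) addnS /= -{2}[size c]addn0 leq_add2l leqn0.
by rewrite -subn1 subn_eq0 leqNgt size_d.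
Qed.

Lemma poly_order_prim_root_exp (f : {poly F}) e m a :
  irreducible_poly f -> poly_order f (e * m) -> root (map_poly phi f) a ->
  m.-primitive_root (a ^+ e).
Proof.
move=> irr_f ord_f fa; have [em_gt0 _] := ord_f.
have m_gt0 : (0 < m)%N by move: em_gt0; rewrite muln_gt0 => /andP[].
have := dvdn_prim_root (poly_order_prim_root irr_f ord_f fa) (dvdn_mull e (dvdnn m)).
by rewrite mulnK.
Qed.

Lemma horner_map_modp_root (f h : {poly F}) a :
  root (map_poly phi f) a -> (map_poly phi (h %% f)).[a] = (map_poly phi h).[a].
Proof.
move=> /rootP fa; rewrite {2}(divp_eq h f) rmorphD rmorphM /= !hornerE fa.
by rewrite mulr0 add0r.
Qed.

Lemma irredp_dvdp_comp_root (f h R : {poly F}) a :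
  irreducible_poly f -> root (map_poly phi f) a ->
  (f %| h \Po R) = root (map_poly phi h) (map_poly phi R).[a].
Proof.
move=> irr_f fa; have map_comp : root (map_poly phi (h \Po R)) a =
    root (map_poly phi h) (map_poly phi R).[a].
  by rewrite map_comp_poly rootE horner_comp.
apply/idP/idP => [dvd_f | ha].
  by rewrite -map_comp; apply: root_dvdp fa; rewrite dvdp_map.
by apply: (irredp_dvdp_root irr_f fa); rewrite map_comp.
Qed.

End RootsOfMaps.

Lemma sum_prod1_eq (R : idomainType) (s s' b b' : R) :
  s * s' = 1 -> b * b' = 1 -> s + s' = b + b' -> (s == b) || (s == b').
Proof.
move=> ss' bb' sum_eq; rewrite -(subr_eq0 s b) -(subr_eq0 s b') -mulf_eq0.
have -> : (s - b) * (s - b') =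
    s * (s + s' - (b + b')) - (s * s' - 1) + (b * b' - 1) by ring.
by rewrite sum_eq ss' bb' !subrr mulr0 subr0 addr0.
Qed.

Lemma prod_XsubC_frob_orbit (C : fieldType) N (charN : [pchar C].-nat N)
    (x : C) m :
  x ^+ (N ^ m) = x ->
  let P := \prod_(z <- [seq x ^+ (N ^ k) | k <- iota 0 m]) ('X - z%:P) in
  map_poly (frob_pow charN) P = P.
Proof.
move=> fix_x P; rewrite {}/P.
have -> : iota 0 m = index_iota 0 m by rewrite /index_iota subn0.
rewrite big_map rmorph_prod.
under eq_bigr do rewrite rmorphB /= map_polyX map_polyC /= /frob_pow -exprM -expnSr.
case: m fix_x => [|m] fix_x; first by rewrite !big_geq.
by rewrite big_nat_recr //= big_nat_recl //= fix_x expn0 expr1 mulrC.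
Qed.

Section PrimitiveRootTrace.
Variables (C : fieldType) (Q : nat).
Hypotheses (charQ : [pchar C].-nat Q) (Q_gt1 : (1 < Q)%N).
Local Notation trace_eq b t := (t ^+ Q.+1 + t ^+ Q + 1 = (b ^+ Q + b + 1) * t).

Lemma prim_root_expr_sq (b : C) : Q.+1.-primitive_root b -> b ^+ Q ^+ Q = b.
Proof.
move=> prim_b; rewrite -exprM -(prim_expr_mod prim_b).
have -> : (Q * Q = (Q - 1) * Q.+1 + 1)%N by rewrite mulnBl mul1n mulnS; lia.
by rewrite modnMDl modn_small ?expr1 // ltnS ltnW.
Qed.

Lemma prim_root_trace_frob (b : C) : Q.+1.-primitive_root b ->
  (b ^+ Q + b + 1) ^+ Q = b ^+ Q + b + 1.
Proof.
move=> prim_b; rewrite !exprDn_pchar // expr1n prim_root_expr_sq //.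
by rewrite (addrC b).
Qed.

Lemma trace_eq_frob (b t : C) : Q.+1.-primitive_root b ->
  trace_eq b t -> trace_eq b (t ^+ Q).
Proof.
move=> prim_b /(congr1 (frob_pow charQ)); rewrite !rmorphD rmorphM rmorph1 /=.
by rewrite /frob_pow prim_root_trace_frob // -!exprM mulnC.
Qed.

Lemma trace_eq_neq_prim (b t : C) : Q.+1.-primitive_root b ->
  trace_eq b t -> t != b.
Proof.
move=> prim_b eq_t; apply/eqP => tb; move: eq_t; rewrite tb exprS => eq_b.
have b2 : b ^+ 2 != 1.
  by rewrite -(prim_order_dvd prim_b) gtnNdvd // ltnS.
have bbQ : b * b ^+ Q = 1 by rewrite -exprS prim_expr_order.
have : (1 + b) * (1 - b ^+ 2) = 0.
  have -> : (1 + b) * (1 - b ^+ 2) =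
      b * (b * b ^+ Q + b ^+ Q + 1 - (b ^+ Q + b + 1) * b) - (b * b ^+ Q - 1) by ring.
  by rewrite eq_b bbQ !subrr mulr0 subr0.
move/eqP; rewrite mulf_eq0 subr_eq0 addrC addr_eq0 => /orP[/eqP bN1 | /eqP b21].
  by move: b2; rewrite bN1 sqrrN expr1n eqxx.
by move: b2; rewrite -b21 eqxx.
Qed.

Lemma trace_eq_neq_prim_expr (b t : C) : Q.+1.-primitive_root b ->
  trace_eq b t -> t != b ^+ Q.
Proof.
move=> prim_b eq_t; apply: (trace_eq_neq_prim (b := b ^+ Q)).
  by rewrite prim_root_exp_coprime // coprimenS.
by rewrite prim_root_expr_sq // (addrC b).
Qed.

(* The Moebius map t |-> (t - b^Q) / (t - b) turns the Frobenius x |-> x^Q on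
   the roots into multiplication by b. *)
Lemma trace_eq_mobius (b t : C) : Q.+1.-primitive_root b ->
  trace_eq b t -> t != b -> t ^+ Q != b ->
  (t ^+ Q - b ^+ Q) / (t ^+ Q - b) = b * ((t - b ^+ Q) / (t - b)).
Proof.
move=> prim_b eq_t tb tQb.
have bbQ : b * b ^+ Q = 1 by rewrite -exprS prim_expr_order.
rewrite mulrA; apply/eqP; rewrite eqr_div ?subr_eq0 //; apply/eqP.
rewrite exprS in eq_t; apply/eqP; rewrite -subr_eq0; apply/eqP.
have -> : (t ^+ Q - b ^+ Q) * (t - b) - b * (t - b ^+ Q) * (t ^+ Q - b) =
   (b - 1) * ((b ^+ Q + b + 1) * t - (t * t ^+ Q + t ^+ Q + 1)) +
   (t ^+ Q - t - b + 1) * (b * b ^+ Q - 1) by ring.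
by rewrite eq_t bbQ !subrr !mulr0 addr0.
Qed.

Lemma trace_eq_frob_orbit (b t : C) : Q.+1.-primitive_root b ->
  trace_eq b t ->
  forall k, (0 < k <= Q)%N -> t ^+ (Q ^ k) != t.
Proof.
move=> prim_b eq_t; pose mu s := (s - b ^+ Q) / (s - b).
have eq_iter k : trace_eq b (t ^+ (Q ^ k)).
  elim: k => [|k IHk]; first by rewrite expn0 expr1.
  by rewrite expnSr exprM; apply: trace_eq_frob.
have mu_iter k : mu (t ^+ (Q ^ k)) = b ^+ k * mu t.
  elim: k => [|k IHk]; first by rewrite expn0 expr1 mul1r.
  have eq_k := eq_iter k; have eq_k1 := eq_iter k.+1.
  rewrite expnSr exprM in eq_k1.
  rewrite expnSr exprM {1}/mu trace_eq_mobius ?(trace_eq_neq_prim prim_b) //.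
  by rewrite -/(mu (t ^+ (Q ^ k))) IHk exprS mulrA.
move=> k /andP[k_gt0 leQk]; apply: contraTneq isT => fix_t.
have mu_t : mu t != 0.
  by rewrite mulf_neq0 ?invr_eq0 ?subr_eq0 ?(trace_eq_neq_prim prim_b)
    ?(trace_eq_neq_prim_expr prim_b).
have : b ^+ k == 1.
  by rewrite -(inj_eq (mulIf mu_t)) mul1r -mu_iter fix_t.
by rewrite -(prim_order_dvd prim_b) gtnNdvd.
Qed.

End PrimitiveRootTrace.

Lemma irreducible_trace_poly (K : finFieldType) (C : closedFieldType)
    (j : {rmorphism K -> C}) (b : C) (a : K) :
  #|K|.+1.-primitive_root b -> j a = b ^+ #|K| + b + 1 ->
  irreducible_poly ('X^(#|K|.+1) + 'X^#|K| - a *: 'X + 1).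
Proof.
move=> prim_b ja; set Q := #|K| in prim_b ja *.
have Q_gt1 : (1 < Q)%N := finNzRing_gt1 K.
have size_G : size ('X^(Q.+1) + 'X^Q - a *: 'X + 1 : {poly K}) = Q.+2.
  have sizeXX : size ('X^(Q.+1) + 'X^Q : {poly K}) = Q.+2.
    by rewrite size_polyDl !size_polyXn.
  have sizeXXa : size ('X^(Q.+1) + 'X^Q - a *: 'X : {poly K}) = Q.+2.
    rewrite size_polyDl sizeXX // size_polyN.
    by rewrite (leq_ltn_trans (size_scale_leq _ _)) // size_polyX ltnS ltnW.
  by rewrite size_polyDl sizeXXa // size_poly1.
apply: (irreducible_frob_orbit (phi := j) (pchar_nat_card j)).
  by rewrite size_G.
  by move=> c; rewrite -rmorphXn expf_card.
move=> x; rewrite size_G /= rootE !rmorphD rmorphN /= map_polyZ !map_polyXn map_polyX.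
rewrite rmorph1 !hornerE ja addrAC subr_eq0 => /eqP eq_x k /andP[k_gt0 ltkQ1].
by apply: (trace_eq_frob_orbit (pchar_nat_card j) Q_gt1 prim_b eq_x); rewrite k_gt0.
Qed.

Lemma exists_irreducible_trace_poly (K L : finFieldType) (j : {rmorphism K -> L})
    (b : L) :
  #|K|.+1.-primitive_root b ->
  exists a : K, j a = b ^+ #|K| + b + 1 /\
    irreducible_poly ('X^(#|K|.+1) + 'X^#|K| - a *: 'X + 1).
Proof.
move=> prim_b; have [a ja] : exists a, j a = b ^+ #|K| + b + 1.
  apply: fmorph_expf_card_fixed.
  by rewrite (prim_root_trace_frob (pchar_nat_card j)) ?finNzRing_gt1.
exists a; split=> //; have [C [iC _]] := countable_algebraic_closure L.
apply: (irreducible_trace_poly (j := iC \o j) (b := iC b)).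
  by rewrite fmorph_primitive_root.
by rewrite /= ja !rmorphD rmorphXn rmorph1.
Qed.

Lemma map_homog_comp (R S : nzRingType) (phi : {rmorphism R -> S}) n
    (psi P : {poly R}) :
  map_poly phi (homog_comp n psi P) =
  homog_comp n (map_poly phi psi) (map_poly phi P).
Proof.
rewrite rmorph_sum; apply: eq_bigr => u _.
by rewrite -!mul_polyC !rmorphM rmorphXn /= map_polyC map_polyXn coef_map.
Qed.

Lemma horner_homog_comp (R : fieldType) n (psi P : {poly R}) x :
  (size psi <= n.+1)%N -> x != 0 ->
  (homog_comp n psi P).[x] = x ^+ n * psi.[P.[x] / x].
Proof.
move=> size_psi nz_x; rewrite (horner_coef_wide _ size_psi) horner_sum mulr_sumr.
apply: eq_bigr => u _; have le_un : (u <= n)%N by rewrite -ltnS.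
have -> : x ^+ n = x ^+ u * x ^+ (n - u) by rewrite -exprD subnKC.
rewrite hornerZ hornerM horner_exp hornerXn exprMn exprVn.
by field; rewrite expf_neq0.
Qed.

Lemma horner0_homog_comp (R : comNzRingType) n (psi P : {poly R}) :
  (homog_comp n psi P).[0] = psi`_n * P.[0] ^+ n.
Proof.
rewrite horner_sum big_ord_recr /= big1 ?add0r => [|u _].
  by rewrite hornerZ subnn expr0 mulr1 horner_exp.
by rewrite hornerZ hornerM hornerXn expr0n subn_eq0 leqNgt ltn_ord !mulr0.
Qed.

Lemma size_homog_comp (R : idomainType) n (psi P : {poly R}) :
  psi`_n != 0 -> (2 < size P)%N ->
  size (homog_comp n psi P) = (n * (size P).-1).+1.
Proof.
move=> nz_psin size_P; set d := (size P).-1.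
have nzP : P != 0 by rewrite -size_poly_eq0 -lt0n ltnW // ltnW.
have size_Pu u : size (P ^+ u) = (d * u).+1.
  by rewrite -size_exp prednK // lt0n size_poly_eq0 expf_neq0.
rewrite /homog_comp big_ord_recr /= subnn expr0 mulr1 addrC size_polyDl.
  by rewrite size_scale // size_Pu mulnC.
rewrite size_scale // size_Pu ltnS; apply: leq_trans (size_sum _ _ _) _.
apply/bigmax_leqP => u _; apply: leq_trans (size_scale_leq _ _) _.
apply: leq_trans (size_polyMleq _ _) _; rewrite size_Pu size_polyXn.
have : (1 < d)%N by rewrite /d -subn1 ltn_subRL.
have := ltn_ord u.
move: (nat_of_ord u) => v; clearbody d; nia.
Qed.

Section TraceMinimalPolynomial.
Variables (F : finFieldType) (C : closedFieldType) (phi : {rmorphism F -> C}).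
Variables (n : nat) (b : C).
Local Notation q := #|F|.
Local Notation Q := (q ^ n)%N.
Hypotheses (n_gt0 : (0 < n)%N) (prim_b : Q.+1.-primitive_root b).
Local Notation g := (b ^+ Q + b + 1).
Local Notation conj_g := [seq g ^+ (q ^ k) | k <- iota 0 n].

Let charq : [pchar C].-nat q := pchar_nat_card phi.
Let charQ : [pchar C].-nat Q. Proof. by rewrite pnatX charq. Qed.
Let q_gt1 : (1 < q)%N := finNzRing_gt1 F.
Let Q_gt1 : (1 < Q)%N. Proof. by rewrite -(expn0 q) ltn_exp2l. Qed.

Lemma trace_fixed : g ^+ Q = g.
Proof. exact: prim_root_trace_frob. Qed.

Lemma trace_frob_neq r : (0 < r < n)%N -> g ^+ (q ^ r) != g.
Proof.
move=> /andP[r_gt0 ltrn]; apply/eqP => fix_g; set s := b ^+ (q ^ r).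
have charqr : [pchar C].-nat (q ^ r)%N by rewrite pnatX charq.
have sum_eq : s + s ^+ Q = b + b ^+ Q.
  apply: (addIr 1); rewrite (addrC s) (addrC b) -[RHS]fix_g.
  by rewrite !exprDn_pchar // expr1n exprAC.
have ss : s * s ^+ Q = 1 by rewrite /s -exprS exprAC (prim_expr_order prim_b) expr1n.
have bb : b * b ^+ Q = 1 by rewrite -exprS (prim_expr_order prim_b).
have qr_gt1 : (1 < q ^ r)%N by rewrite -(expn0 q) ltn_exp2l.
have qr_ltQ : (q ^ r < Q)%N by rewrite ltn_exp2l.
case/orP: (sum_prod1_eq ss bb sum_eq).
  rewrite -[X in _ == X](expr1 b) (eq_prim_root_expr prim_b).
  by rewrite !modn_small ?gtn_eqF // ltnS ltnW.
by rewrite (eq_prim_root_expr prim_b) !modn_small ?ltn_eqF // ltnS ltnW.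
Qed.

Lemma uniq_trace_conj : uniq conj_g.
Proof. exact: (uniq_frob_orbit charq) trace_frob_neq. Qed.

Lemma trace_fixed_iter s : g ^+ (Q ^ s) = g.
Proof.
elim: s => [|s IHs]; first by rewrite expn0 expr1.
by rewrite expnSr exprM IHs trace_fixed.
Qed.

Lemma trace_conj_poly_descends :
  exists P : {poly F}, map_poly phi P = \prod_(z <- conj_g) ('X - z%:P).
Proof.
apply: map_poly_expf_card_fixed => i.
by rewrite -{2}(prod_XsubC_frob_orbit charq trace_fixed) coef_map.
Qed.

Lemma trace_in_conj : g \in conj_g.
Proof. by apply/mapP; exists 0%N; rewrite ?mem_iota ?expn0 ?expr1. Qed.

Variable psi : {poly F}.
Hypotheses (monic_psi : psi \is monic) (psi_g : root (map_poly phi psi) g).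
Hypothesis min_psi :
  forall h, h != 0 -> root (map_poly phi h) g -> (size psi <= size h)%N.

Lemma size_min_trace_poly : size psi = n.+1.
Proof.
have [P map_P] := trace_conj_poly_descends.
have size_P : size P = n.+1.
  by rewrite -(size_map_poly phi) map_P size_prod_XsubC size_map size_iota.
apply/eqP; rewrite eqn_leq -{1}size_P min_psi /=; first last.
- by rewrite map_P root_prod_XsubC trace_in_conj.
- by rewrite -size_poly_eq0 size_P.
rewrite -(size_map_poly phi).
apply: (frob_orbit_lt_size charq _ _ psi_g trace_frob_neq).
  by rewrite map_poly_eq0 monic_neq0.
exact: coef_map_expf_card.
Qed.

Lemma coef_min_trace_poly_n : psi`_n = 1.
Proof. by have := monicP monic_psi; rewrite /lead_coef size_min_trace_poly. Qed.

Lemma map_min_trace_poly : map_poly phi psi = \prod_(z <- conj_g) ('X - z%:P).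
Proof.
rewrite [LHS](all_roots_prod_XsubC (rs := conj_g)).
- by rewrite lead_coef_map (monicP monic_psi) rmorph1 scale1r.
- by rewrite size_map_poly size_min_trace_poly size_map size_iota.
- apply/allP => _ /mapP[k _ ->]; apply: (root_frob_pow_iter charq) => //.
  exact: coef_map_expf_card.
- by rewrite uniq_rootsE uniq_trace_conj.
Qed.

Local Notation Qpoly := ('X^(Q + 1) + 'X^Q + 1 : {poly F}).
Local Notation Fpoly := (homog_comp n psi Qpoly).

Lemma horner_map_Qpoly x : (map_poly phi Qpoly).[x] = x ^+ (Q + 1) + x ^+ Q + 1.
Proof. by rewrite !rmorphD rmorph1 /= !map_polyXn !hornerE. Qed.

Lemma size_homog_trace : size Fpoly = (n * (Q + 1)).+1.
Proof.
have size_Qpoly : size Qpoly = Q.+2.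
  by rewrite size_polyDl ?size_polyDl ?size_polyXn ?size_poly1 ?addn1.
rewrite size_homog_comp ?size_Qpoly ?addn1 //.
  by rewrite coef_min_trace_poly_n oner_neq0.
by rewrite ltnS ltnW.
Qed.

Lemma homog_trace_root_neq0 x : root (map_poly phi Fpoly) x -> x != 0.
Proof.
apply: contraTneq => ->; rewrite rootE map_homog_comp horner0_homog_comp coef_map /=.
rewrite coef_min_trace_poly_n rmorph1 mul1r horner_map_Qpoly addn1 exprS mul0r add0r.
by rewrite expr0n (gtn_eqF (ltnW Q_gt1)) add0r expr1n oner_neq0.
Qed.

Lemma homog_trace_root x : root (map_poly phi Fpoly) x ->
  exists2 k, (k < n)%N & x ^+ (Q + 1) + x ^+ Q + 1 = g ^+ (q ^ k) * x.
Proof.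
move=> Fx; have nz_x := homog_trace_root_neq0 Fx.
move: Fx; rewrite rootE map_homog_comp horner_homog_comp ?size_map_poly //;
  last by rewrite size_min_trace_poly.
rewrite mulf_eq0 expf_eq0 (negbTE nz_x) andbF /= -rootE map_min_trace_poly.
rewrite root_prod_XsubC horner_map_Qpoly => /mapP[k].
rewrite mem_iota => /andP[_ ltkn] eq_k.
by exists k => //; rewrite -eq_k divfK.
Qed.

Lemma homog_trace_frob_orbit x : root (map_poly phi Fpoly) x ->
  forall m, (0 < m < n * (Q + 1))%N -> x ^+ (q ^ m) != x.
Proof.
move=> Fx m /andP[m_gt0 ltm]; have [k ltkn eq_x] := homog_trace_root Fx.
have nz_x := homog_trace_root_neq0 Fx.
have charqk : [pchar C].-nat (q ^ k)%N by rewrite pnatX charq.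
have charqm : [pchar C].-nat (q ^ m)%N by rewrite pnatX charq.
pose bk := b ^+ (q ^ k).
have prim_bk : Q.+1.-primitive_root bk.
  rewrite prim_root_exp_coprime // coprimeXl // /coprime.
  by rewrite -(prednK n_gt0) expnSr -addn1 gcdnMDl gcdn1.
have eq_xk : x ^+ Q.+1 + x ^+ Q + 1 = (bk ^+ Q + bk + 1) * x.
  by rewrite -addn1 eq_x !exprDn_pchar // expr1n exprAC.
apply/eqP => fix_x.
have fix_gk : (g ^+ (q ^ k)) ^+ (q ^ m) = g ^+ (q ^ k).
  have -> : g ^+ (q ^ k) = (x ^+ (Q + 1) + x ^+ Q + 1) / x by rewrite eq_x mulfK.
  rewrite -[LHS]/(frob_pow charqm _) fmorph_div !rmorphD !rmorphXn rmorph1 /=.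
  by rewrite /frob_pow fix_x.
have fix_g : g ^+ (q ^ (m %% n)) = g.
  have : (g ^+ (q ^ m)) ^+ (q ^ k) = g ^+ (q ^ k) by rewrite exprAC fix_gk.
  rewrite {1}(divn_eq m n) expnD (mulnC (m %/ n)%N) expnM exprM trace_fixed_iter.
  exact: frob_pow_inj.
have rem_m : (m %% n = 0)%N.
  case: (posnP (m %% n)%N) => // r_gt0; move/eqP: fix_g.
  by rewrite (negbTE (trace_frob_neq _)) // r_gt0 ltn_pmod.
set s := (m %/ n)%N.
have def_m : m = (s * n)%N by rewrite {1}(divn_eq m n) rem_m addn0.
have s_gt0 : (0 < s)%N by move: m_gt0; rewrite def_m muln_gt0 => /andP[].
have leQs : (s <= Q)%N.
  have : (s * n < (Q + 1) * n)%N by rewrite -def_m mulnC.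
  by rewrite ltn_pmul2r // addn1 ltnS.
move: fix_x; rewrite def_m mulnC expnM; apply/eqP.
by apply: (trace_eq_frob_orbit charQ Q_gt1 prim_bk eq_xk); rewrite s_gt0.
Qed.

Lemma irreducible_homog_trace : irreducible_poly Fpoly.
Proof.
apply: (irreducible_frob_orbit (phi := phi) charq).
- by rewrite size_homog_trace ltnS muln_gt0 n_gt0 addn1.
- by move=> c; rewrite -rmorphXn expf_card.
- by move=> x Fx k; rewrite size_homog_trace; apply: homog_trace_frob_orbit.
Qed.

End TraceMinimalPolynomial.
Theorem mainTheorem11 (Fq : finFieldType) (q n e : nat) (f : {poly Fq})
  (hq : #|Fq| = q) (hn : (1 <= n)%N) (he : (0 < e)%N)
  (hmon : f \is monic) (hirr : irreducible_poly f)
  (hdeg : size f = (2 * n).+1)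
  (hord : poly_order f (e * (q ^ n + 1))) :
  (* (a) *)
  (forall (K L : finFieldType) (iota : {rmorphism Fq -> K})
          (j : {rmorphism K -> L}) (alpha : L),
     #|K| = (q ^ n)%N -> #|L| = (q ^ (2 * n))%N ->
     root (map_poly (fun c => j (iota c)) f) alpha ->
     let beta := alpha ^+ e in
     exists a : K, j a = beta ^+ (q ^ n) + beta + 1 /\
       irreducible_poly ('X^(q ^ n + 1) + 'X^(q ^ n) - a *: 'X + 1 : {poly K}))
  /\
  (* (b) and (c) *)
  (forall psi : {poly Fq},
     let R := ('X^(e * q ^ n) + 'X^e + 1) %% f in
     psi \is monic -> f %| psi \Po R ->
     (forall g : {poly Fq}, g != 0 -> f %| g \Po R -> (size psi <= size g)%N) ->
     (irreducible_poly psi /\ size psi = n.+1) /\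
     (let F := homog_comp n psi ('X^(q ^ n + 1) + 'X^(q ^ n) + 1) in
      irreducible_poly F /\ size F = (n * (q ^ n + 1)).+1)).
Proof.
subst q; set Q := (#|Fq| ^ n)%N.
have prim_alpha_e (T : fieldType) (phi : {rmorphism Fq -> T}) (alpha : T) :
    root (map_poly phi f) alpha -> Q.+1.-primitive_root (alpha ^+ e).
  by rewrite -addn1; apply: poly_order_prim_root_exp.
split.
  move=> K L iota j alpha cardK _ f_alpha beta; rewrite addn1 -cardK.
  apply: exists_irreducible_trace_poly; rewrite cardK.
  exact: prim_alpha_e _ (j \o iota) _ f_alpha.
move=> psi R monic_psi f_psiR min_psi.
have [C [phi _]] := countable_algebraic_closure Fq.
have [alpha f_alpha] : exists alpha, root (map_poly phi f) alpha.
  by apply/closed_rootP; rewrite size_map_poly hdeg; lia.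
set b := alpha ^+ e; have prim_b := prim_alpha_e _ phi _ f_alpha.
have root_iff h : (f %| h \Po R) = root (map_poly phi h) (b ^+ Q + b + 1).
  rewrite (irredp_dvdp_comp_root _ _ hirr f_alpha) horner_map_modp_root //.
  by rewrite !rmorphD rmorph1 /= !map_polyXn !hornerE exprM.
have psi_g : root (map_poly phi psi) (b ^+ Q + b + 1) by rewrite -root_iff.
have min_psi' h :
    h != 0 -> root (map_poly phi h) (b ^+ Q + b + 1) -> (size psi <= size h)%N.
  by rewrite -root_iff; apply: min_psi.
split; split.
- exact: irredp_min_root (monic_neq0 monic_psi) psi_g min_psi'.
- exact: (size_min_trace_poly hn prim_b monic_psi psi_g min_psi').
- exact: (irreducible_homog_trace hn prim_b monic_psi psi_g min_psi').
- exact: (size_homog_trace hn prim_b monic_psi psi_g min_psi').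
Qed.
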